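(* Let $G$ be a finite simple undirected graph and $r<s$ positive integers; run set-k on $(G,r,s)$, with processing order $R_1,R_2,\dots$. At any time $t$, for every $K_r$ $R$ that is unprocessed at time $t$, the current value $\delta(R)$ is at least the $\mathcal{S}_t$-degree of $R$. Moreover, if $t=t_k$ for some $k$, then $\delta(R)$ equals the $\mathcal{S}_t$-degree of $R$ for every such unprocessed $R$.
   Context: A $K_r$ is an $r$-clique of $G$. Procedure set-k$(G,r,s)$: enumerate all $K_r$s and $K_s$s of $G$; for every $K_r$ $R$ initialize $\delta(R)$ to the number of $K_s$s containing $R$; mark every $K_r$ unprocessed. Then repeat until all $K_r$s are processed: pick an unprocessed $K_r$ $R$ with minimum current $\delta(R)$ (ties broken arbitrarily); set $\kappa(R)=\delta(R)$; for each $K_s$ $S$ containing $R$: if some $K_r$ contained in $S$ is already marked processed, skip $S$; otherwise, for each $K_r$ $R'\subset S$ with $R'\neq R$, if $\delta(R')>\delta(R)$ then decrease $\delta(R')$ by $1$. Finally mark $R$ processed. $R_i$ denotes the $i$-th processed $K_r$; ''at time $t$'' means at the beginning of the iteration in which $R_t$ is processed. The sequence $\kappa(R_i)$ is non-decreasing; the transition time $t_k$ is the unique index with $\kappa(R_{t_k})=k$ and ($t_k=1$ or $\kappa(R_{t_k-1})<k$); it is defined only when some $K_r$ receives $\kappa$-value $k$. A $K_s$ $S$ is unprocessed at time $t$ if all $K_r$s contained in $S$ are unprocessed at time $t$; $\mathcal{S}_t$ is the set of such $K_s$s. For a set $\mathcal{S}$ of $K_s$s, the $\mathcal{S}$-degree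 of a $K_r$ $R$ is the number of $S\in\mathcal{S}$ containing $R$. *)

From mathcomp Require Import all_boot.

Section SetK.
Variables (T : finType) (e : rel T) (r s : nat).

Definition is_clique (A : {set T}) : bool :=
  [forall x in A, forall y in A, (x != y) ==> e x y].

Definition is_Kr (A : {set T}) : bool := is_clique A && (#|A| == r).
Definition is_Ks (A : {set T}) : bool := is_clique A && (#|A| == s).

Definition delta0 (R : {set T}) : nat :=
  #|[set S : {set T} | is_Ks S & R \subset S]|.

Definition Ks_unprocessed (P : {set {set T}}) (S : {set T}) : bool :=
  [forall R' : {set T}, (is_Kr R' && (R' \subset S)) ==> (R' \notin P)].

(* body of the inner loop for one K_s S containing R (P = processed K_r's) *)
Definition update_S (P : {set {set T}}) (R S : {set T})
    (d : {set T} -> nat) : {set T} -> nat :=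
  if ~~ Ks_unprocessed P S then d
  else fun R' => if [&& is_Kr R', R' \subset S, R' != R & d R < d R']
                 then (d R').-1 else d R'.

Definition step (P : {set {set T}}) (d : {set T} -> nat) (R : {set T})
    : {set T} -> nat :=
  foldr (update_S P R) d [seq S <- enum {set T} | is_Ks S & R \subset S].

Definition state (pre : seq {set T}) : {set {set T}} * ({set T} -> nat) :=
  foldl (fun acc R => (R |: acc.1, step acc.1 acc.2 R)) (set0, delta0) pre.

(* 0-based: index i corresponds to time t = i+1, i.e. R_{i+1} = nth set0 ord i *)
Definition delta_at (ord : seq {set T}) (i : nat) : {set T} -> nat :=
  (state (take i ord)).2.

Definition processed_at (ord : seq {set T}) (i : nat) : {set {set T}} :=
  [set R in take i ord].

(* ord is a possible processing order of a complete run of set-k(G,r,s) *)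
Definition valid_run (ord : seq {set T}) : Prop :=
  (forall i, i < size ord ->
     is_Kr (nth set0 ord i) /\ nth set0 ord i \notin take i ord /\
     (forall R', is_Kr R' -> R' \notin take i ord ->
        delta_at ord i (nth set0 ord i) <= delta_at ord i R'))
  /\ (forall R, is_Kr R -> R \in ord).

Definition kappa (ord : seq {set T}) (i : nat) : nat :=
  delta_at ord i (nth set0 ord i).

Definition S_deg (ord : seq {set T}) (i : nat) (R : {set T}) : nat :=
  #|[set S : {set T} | is_Ks S &
       (R \subset S) && Ks_unprocessed (processed_at ord i) S]|.

End SetK.

From mathcomp Require Import all_boot.
From mathcomp Require Import zify.

(* For every unprocessed K_r R at time t, delta(R) = max(S_t-degree of R, kappa(R_{t-1})):
   processing R_t removes the K_s's through R_t from S_t and lowers delta(R) once for each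
   of them that contains R, except that delta(R) is never pushed below delta(R_t) = kappa(R_t).
   At a transition time delta(R) >= kappa(R_t) > kappa(R_{t-1}), so the maximum is the
   degree. *)

Lemma card_set_count (T : finType) (p : pred T) : #|[set x | p x]| = count p (enum T).
Proof. by rewrite cardsE cardE enumT /enum_mem -size_filter. Qed.

Section SetKInvariant.
Variables (T : finType) (e : rel T) (r s : nat).
Local Notation Kr := (is_Kr T e r).
Local Notation Ks := (is_Ks T e s).
Local Notation unproc := (Ks_unprocessed T e r).
Local Notation delta_at := (delta_at T e r s).
Local Notation S_deg := (S_deg T e r s).
Local Notation processed_at := (processed_at T).

Lemma foldr_update_S P (L : seq {set T}) X (d : {set T} -> nat) R :
  R != X -> d X <= d R ->
  foldr (update_S T e r P X) d L R =
    maxn (d X) (d R - count (fun S => unproc P S && Kr R && (R \subset S)) L)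
  /\ foldr (update_S T e r P X) d L X = d X.
Proof.
move=> neRX le_dX_dR; elim: L => [|S L [IH_R IH_X]] /=; first by split => //; lia.
rewrite /update_S; case: (unproc P S) => /=; last by split.
split; last by rewrite eqxx /= !andbF.
rewrite neRX IH_X; move: IH_R.
case: (Kr R); case: (R \subset S) => /= ->; rewrite ?andbT ?andbF //=; try lia.
by case: ltnP; lia.
Qed.

Lemma step_unprocessed P X (d : {set T} -> nat) R :
  Kr R -> R != X -> d X <= d R ->
  step T e r s P d X R =
    maxn (d X) (d R - #|[set S | [&& Ks S, X \subset S, R \subset S & unproc P S]]|).
Proof.
move=> KR neRX le_dX_dR; rewrite /step.
have [-> _] :=
  foldr_update_S P [seq S <- enum {set T} | Ks S & X \subset S] X d R neRX le_dX_dR.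
rewrite count_filter card_set_count; congr (maxn _ (_ - _)); apply: eq_count => S.
by rewrite /= KR andbT; case: (unproc P S); case: (R \subset S); rewrite ?andbT ?andbF.
Qed.

Lemma state_rcons pre X :
  state T e r s (rcons pre X) =
  (X |: (state T e r s pre).1, step T e r s (state T e r s pre).1 (state T e r s pre).2 X).
Proof. by rewrite /state foldl_rcons. Qed.

Lemma state_processed pre : (state T e r s pre).1 = [set R in pre].
Proof.
elim/last_ind: pre => [|pre X IH]; first by apply/setP => R; rewrite !inE.
by rewrite state_rcons /= IH; apply/setP => R; rewrite !inE mem_rcons in_cons.
Qed.

Lemma Ks_unprocessed_setU1 P X S : Kr X ->
  unproc (X |: P) S = unproc P S && ~~ (X \subset S).
Proof.
move=> KX; apply/forallP/andP => [unprocXP | [/forallP unprocP notXS] R].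
- split; last first.
    by apply/negP => XS; have /implyP := unprocXP X; rewrite KX XS setU11 => /(_ isT).
  apply/forallP => R; apply/implyP => /(implyP (unprocXP R)).
  by rewrite in_setU1 negb_or => /andP[].
- apply/implyP => /andP[KR RS]; rewrite in_setU1 negb_or (implyP (unprocP R)) ?KR ?RS //.
  by rewrite andbT; apply: contraNneq notXS => <-.
Qed.

Lemma S_deg_succ ord t R : t < size ord -> Kr (nth set0 ord t) ->
  S_deg ord t R = S_deg ord t.+1 R +
    #|[set S | [&& Ks S, nth set0 ord t \subset S, R \subset S
                  & unproc (processed_at ord t) S]]|.
Proof.
move=> lt_t KX; set X := nth set0 ord t in KX *; rewrite /S_deg.
have ->: processed_at ord t.+1 = X |: processed_at ord t.
  by apply/setP => R'; rewrite !inE (take_nth set0) // mem_rcons in_cons.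
rewrite -(cardsID [set S : {set T} | X \subset S]) addnC; congr (_ + _); apply: eq_card => S.
- rewrite !inE Ks_unprocessed_setU1 //.
  by case: (Ks S); case: (X \subset S); rewrite ?andbT ?andbF.
- by rewrite !inE; case: (Ks S); case: (X \subset S); rewrite ?andbT ?andbF.
Qed.

(* kappa(R_{t-1}), taken to be 0 before the first K_r is processed *)
Definition kappa_prev (ord : seq {set T}) (t : nat) : nat :=
  if t is t'.+1 then kappa T e r s ord t' else 0.

Lemma delta_at_unprocessed ord : valid_run T e r s ord ->
  forall t, t <= size ord -> forall R, Kr R -> R \notin take t ord ->
  delta_at ord t R = maxn (S_deg ord t R) (kappa_prev ord t).
Proof.
move=> [run _]; elim=> [|t IH] le_t R KR notR.
  rewrite maxn0 /delta_at /S_deg /= take0; apply: eq_card => S; rewrite !inE.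
  have unproc0 : unproc (processed_at ord 0) S.
    by apply/forallP => R'; rewrite /processed_at take0 inE implybT.
  by rewrite unproc0 andbT.
have [KX [notX minX]] := run t le_t; set X := nth set0 ord t in KX notX minX.
have take_succ : take t.+1 ord = rcons (take t ord) X by rewrite (take_nth set0).
move: notR; rewrite take_succ mem_rcons in_cons negb_or => /andP[neRX notR].
have IH_R := IH (ltnW le_t) R KR notR; have IH_X := IH (ltnW le_t) X KX notX.
rewrite /delta_at take_succ state_rcons /= -/(delta_at ord t) state_processed.
rewrite -/(processed_at ord t) step_unprocessed ?minX //.
rewrite (S_deg_succ _ _ R le_t KX) -/X in IH_R.
move: IH_R IH_X; rewrite /kappa_prev /kappa -/X; lia.
Qed.

End SetKInvariant.

Theorem claim2 (T : finType) (e : rel T) (r s : nat) :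
  symmetric e -> irreflexive e -> 0 < r -> r < s ->
  forall ord : seq {set T}, valid_run T e r s ord ->
  forall i, i < size ord ->
  forall R : {set T}, is_Kr T e r R -> R \notin take i ord ->
    S_deg T e r s ord i R <= delta_at T e r s ord i R /\
    ((exists k, kappa T e r s ord i = k /\
                (i = 0 \/ kappa T e r s ord i.-1 < k)) ->
     delta_at T e r s ord i R = S_deg T e r s ord i R).
Proof.
(* The invariant holds for an arbitrary relation e and arbitrary r, s. *)
move=> _ _ _ _ ord run i lt_i R KR notR.
have delta_R := @delta_at_unprocessed T e r s ord run i (ltnW lt_i) R KR notR.
have [_ [_ minX]] := run.1 i lt_i.
have le_kappa_delta : kappa T e r s ord i <= delta_at T e r s ord i R by exact: minX.
split; first by rewrite delta_R leq_maxl.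
move=> [_ [<- transition]]; move: delta_R le_kappa_delta transition.
by case: i {lt_i notR minX} => [|i] /=; rewrite /kappa_prev; lia.
Qed.
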